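(* Assume $\lambda<1-\frac1d$. Let $x$ be a fluid solution such that $x_{0,0}(t)>0$ for all $t\ge0$. Then there exist $\alpha>0$ and $\beta>0$ such that $\|x(t)-x^\star\|\le\alpha e^{-\beta t}$ for all $t\ge0$, where $x^\star$ is given by $x^\star_{0,0}=1-\lambda-\frac1d$, $x^\star_{0,1}=\frac1d$, $x^\star_{1,1}=\lambda$ and $x^\star_{i,j}=0$ otherwise, and $\|\cdot\|$ is the Euclidean norm.
   Context: Fix $\lambda\in(0,1)$, an integer $d\ge2$ and an integer $I>1$. $\mathcal S=\{x=(x_{i,j})_{0\le i\le j\le I}: x_{i,j}\ge0,\ \sum_{i=0}^I\sum_{j=i}^I x_{i,j}=1\}$; $x_{i,\cdot}=\sum_{j=i}^I x_{i,j}$, $x_{\cdot,j}=\sum_{i=0}^j x_{i,j}$. For $0\le j\le I$: $\mathcal R_j(x)=\max\{0,\lambda(1-d\sum_{i=0}^j(j+1-i)x_{i,\cdot})\}\,\mathbf 1\{\sum_{i=0}^j x_{\cdot,i}=0\}$, $\mathcal G_j(x)=\lambda d\,\mathbf 1\{\sum_{i=0}^j x_{\cdot,i}=0,\ d\sum_{i=0}^j(j+1-i)x_{i,\cdot}\le1\}\sum_{i=0}^j x_{i,\cdot}$. Write $\rho_k^{a,b}(x)=\mathcal R_k(x)\frac{x_{a,b}}{x_{\cdot,b}}\mathbf 1\{x_{\cdot,b}>0\}$ (equal to $0$ when $x_{\cdot,b}=0$). The drift $b(x)$ is: $b_{0,0}=\lambda d(x_{0,\cdot}-x_{0,0})-\lambda+\mathcal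 R_0(x)$; for $i<j$: $b_{i,j}=x_{i+1,j}-\mathbf 1\{i>0\}x_{i,j}-\lambda d x_{i,j}-\rho_{j-1}^{i,j}+\mathbf 1\{i>0\}\rho_{j-2}^{i-1,j-1}+\mathbf 1\{j=I,i>0\}\rho_{I-1}^{i-1,I}$; $b_{1,1}=-x_{1,1}+\lambda d(x_{1,\cdot}-x_{1,1})+\lambda-\mathcal R_0(x)-\rho_0^{1,1}-\mathcal G_1(x)$; for $2\le i\le I-1$: $b_{i,i}=-x_{i,i}+\lambda d(x_{i,\cdot}-x_{i,i})-\rho_{i-1}^{i,i}+\rho_{i-2}^{i-1,i-1}+\mathcal G_{i-1}(x)-\mathcal G_i(x)$; $b_{I,I}=-x_{I,I}+\rho_{I-2}^{I-1,I-1}+\mathcal G_{I-1}(x)+\rho_{I-1}^{I-1,I}$. A fluid solution is an absolutely continuous $x:\mathbb R_+\to\mathcal S$ with $\dot x_{i,j}(t)=b_{i,j}(x(t))$ for a.e. $t$ and all $i\le j$. *)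

From Stdlib Require Import Reals Lra Lia List.
Open Scope R_scope.

Fixpoint fsum (n : nat) (f : nat -> R) : R :=
  match n with
  | O => 0
  | S n' => fsum n' f + f n'
  end.

Definition ind0 (a : R) : R := if Req_EM_T a 0 then 1 else 0.
Definition bnat (b : bool) : R := if b then 1 else 0.

(* A state: x i j meaningful for 0 <= i <= j <= I. *)
Definition state := nat -> nat -> R.

Section Model.
Variables (lam : R) (d I : nat).

Definition dR : R := INR d.

Definition row (x : state) (i : nat) : R :=
  fsum (S I) (fun j => if Nat.leb i j then x i j else 0).
Definition col (x : state) (j : nat) : R :=
  fsum (S j) (fun i => x i j).

Definition in_S (x : state) : Prop :=
  (forall i j, (i <= j)%nat -> (j <= I)%nat -> 0 <= x i j) /\
  fsum (S I) (fun i => row x i) = 1.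

Definition wsum (x : state) (j : nat) : R :=
  fsum (S j) (fun i => INR (S j - i) * row x i).
Definition csum (x : state) (j : nat) : R :=
  fsum (S j) (fun i => col x i).

Definition Rj (x : state) (j : nat) : R :=
  Rmax 0 (lam * (1 - dR * wsum x j)) * ind0 (csum x j).

Definition Gj (x : state) (j : nat) : R :=
  lam * dR *
  (if Req_EM_T (csum x j) 0 then
     (if Rle_dec (dR * wsum x j) 1 then 1 else 0) else 0) *
  fsum (S j) (fun i => row x i).

Definition rho (x : state) (k a b : nat) : R :=
  if Rlt_dec 0 (col x b) then Rj x k * (x a b / col x b) else 0.

Definition drift (x : state) (i j : nat) : R :=
  if Nat.ltb i j then
    x (S i) j - bnat (Nat.ltb 0 i) * x i j - lam * dR * x i j
    - rho x (j - 1) i j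
    + bnat (Nat.ltb 0 i) * rho x (j - 2) (i - 1) (j - 1)
    + bnat (Nat.eqb j I && Nat.ltb 0 i) * rho x (I - 1) (i - 1) I
  else
  if Nat.eqb i 0 then
    lam * dR * (row x 0 - x 0%nat 0%nat) - lam + Rj x 0
  else if Nat.eqb i I then
    - x I I + rho x (I - 2) (I - 1) (I - 1) + Gj x (I - 1)
    + rho x (I - 1) (I - 1) I
  else if Nat.eqb i 1 then
    - x 1%nat 1%nat + lam * dR * (row x 1 - x 1%nat 1%nat) + lam - Rj x 0
    - rho x 0 1 1 - Gj x 1
  else
    - x i i + lam * dR * (row x i - x i i) - rho x (i - 1) i i
    + rho x (i - 2) (i - 1) (i - 1) + Gj x (i - 1) - Gj x i.

Definition xstar (i j : nat) : R :=
  match i, j with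
  | O, O => 1 - lam - / dR
  | O, S O => / dR
  | S O, S O => lam
  | _, _ => 0
  end.

Definition eucl_dist (x y : state) : R :=
  sqrt (fsum (S I) (fun i => fsum (S I) (fun j =>
          if Nat.leb i j then (x i j - y i j) ^ 2 else 0))).

End Model.

(* a <= u1 <= v1 <= u2 <= v2 <= ... <= b : non-overlapping subintervals of [a,b] *)
Fixpoint intervals_in (a b : R) (l : list (R * R)) : Prop :=
  match l with
  | nil => a <= b
  | (u, v) :: l' => a <= u /\ u <= v /\ intervals_in v b l'
  end.

Definition total_length (l : list (R * R)) : R :=
  fold_right (fun p s => (snd p - fst p) + s) 0 l.
Definition total_var (f : R -> R) (l : list (R * R)) : R :=
  fold_right (fun p s => Rabs (f (snd p) - f (fst p)) + s) 0 l.

Definition abs_cont_on (f : R -> R) (a b : R) : Prop :=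
  forall eps, 0 < eps -> exists delta, 0 < delta /\
    forall l, intervals_in a b l -> total_length l < delta ->
      total_var f l < eps.

Definition null_set (N : R -> Prop) : Prop :=
  forall eps, 0 < eps -> exists c e : nat -> R,
    (forall n, c n <= e n) /\
    (forall n, sum_f_R0 (fun k => e k - c k) n <= eps) /\
    (forall t, N t -> exists n, c n <= t <= e n).

(* fluid solution x : R_+ -> S (values at t < 0 are irrelevant) *)
Definition fluid_solution (lam : R) (d I : nat) (x : R -> state) : Prop :=
  (forall t, 0 <= t -> in_S I (x t)) /\
  (forall i j, (i <= j)%nat -> (j <= I)%nat ->
     forall T, 0 <= T -> abs_cont_on (fun t => x t i j) 0 T) /\
  (exists N, null_set N /\
     forall t, 0 < t -> ~ N t ->
       forall i j, (i <= j)%nat -> (j <= I)%nat ->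
         derivable_pt_lim (fun s => x s i j) t (drift lam d I (x t) i j)).

(* Since x_{0,0}(t) > 0, every partial column sum Σ_{i≤j} x_{·,i} is positive, so all boundary
   terms R_j, G_j and ρ vanish and the fluid equations reduce to the linear triangular system
     x_{i,j}' = x_{i+1,j} - (1{i>0} + λd) x_{i,j}                   (i < j),
     x_{i,i}' = -x_{i,i} + λd Σ_{j>i} x_{i,j} + λ 1{i=1}             (1 ≤ i < I),
     x_{I,I}' = -x_{I,I},
   with equilibrium x⋆.  Solving it backwards from x_{I,I}, each coordinate y satisfies
   y' = -c (y - y⋆) + g with c ≥ 1 or c = λd > λ/2, and a forcing g that already decays like
   e^{-λt/2}; a comparison argument for absolutely continuous functions transfers this rate to y.
   The coordinate x_{0,0} then follows from the mass constraint Σ x_{i,j} = 1. *)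

From Stdlib Require Import Reals Lra Lia List Classical.
Open Scope R_scope.

Lemma fsum_S n f : fsum (S n) f = fsum n f + f n.
Proof. reflexivity. Qed.

Lemma fsum_ext n f g : (forall k, (k < n)%nat -> f k = g k) -> fsum n f = fsum n g.
Proof.
  induction n as [|n IH]; simpl; intros H; auto.
  rewrite IH by (intros; apply H; lia). rewrite H by lia. reflexivity.
Qed.

Lemma fsum_plus n f g : fsum n (fun k => f k + g k) = fsum n f + fsum n g.
Proof. induction n; simpl; [lra|]. rewrite IHn; lra. Qed.

Lemma fsum_minus n f g : fsum n (fun k => f k - g k) = fsum n f - fsum n g.
Proof. induction n; simpl; [lra|]. rewrite IHn; lra. Qed.

Lemma fsum_scal n c f : fsum n (fun k => c * f k) = c * fsum n f.
Proof. induction n; simpl; [lra|]. rewrite IHn; lra. Qed.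

Lemma fsum_le n f g : (forall k, (k < n)%nat -> f k <= g k) -> fsum n f <= fsum n g.
Proof.
  induction n as [|n IH]; simpl; intros H; [lra|].
  assert (f n <= g n) by (apply H; lia).
  assert (fsum n f <= fsum n g) by (apply IH; intros; apply H; lia). lra.
Qed.

Lemma fsum_nonneg n f : (forall k, (k < n)%nat -> 0 <= f k) -> 0 <= fsum n f.
Proof.
  intros H. replace 0 with (fsum n (fun _ => 0)).
  - apply fsum_le. exact H.
  - induction n; simpl; [reflexivity|]. rewrite IHn by (intros; apply H; lia). ring.
Qed.

Lemma fsum_zero n f : (forall k, (k < n)%nat -> f k = 0) -> fsum n f = 0.
Proof.
  induction n as [|n IH]; simpl; intros H; [lra|].
  rewrite IH by (intros; apply H; lia). rewrite H by lia. lra.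
Qed.

Lemma fsum_single n m f :
  (m < n)%nat -> (forall k, (k < n)%nat -> k <> m -> f k = 0) -> fsum n f = f m.
Proof.
  induction n as [|n IH]; simpl; intros Hm H; [lia|].
  destruct (Nat.eq_dec m n) as [->|Hne].
  - rewrite fsum_zero by (intros; apply H; lia). lra.
  - rewrite IH by (try lia; intros; apply H; lia). rewrite (H n) by lia. lra.
Qed.

Lemma fsum_two n f :
  (2 <= n)%nat -> (forall k, (2 <= k)%nat -> (k < n)%nat -> f k = 0) ->
  fsum n f = f 0%nat + f 1%nat.
Proof.
  intros Hn. induction n as [|n IH]; intros H; [lia|].
  destruct (Nat.eq_dec n 1) as [->|Hne]; [simpl; ring|].
  rewrite fsum_S, IH by (try lia; intros; apply H; lia). rewrite (H n) by lia. ring.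
Qed.

Lemma fsum_sum_f_R0 n f : fsum (S n) f = sum_f_R0 f n.
Proof. induction n; simpl; [lra|]. simpl in IHn. rewrite <- IHn. lra. Qed.

Lemma fsum_half_pow M : fsum M (fun n => (/2) ^ S n) = 1 - (/2) ^ M.
Proof. induction M; simpl in *; [lra|]. rewrite IHM. lra. Qed.

Lemma intervals_in_le a b l : intervals_in a b l -> a <= b.
Proof.
  revert a; induction l as [|[u v] l IH]; simpl; intros a H; [lra|].
  destruct H as [H1 [H2 H3]]. apply IH in H3. lra.
Qed.

Lemma intervals_in_widen a s t l : intervals_in a s l -> s <= t -> intervals_in a t l.
Proof.
  revert a; induction l as [|[u v] l IH]; simpl; intros a H Hst; [lra|].
  destruct H as [H1 [H2 H3]]. repeat split; auto.
Qed.

Lemma intervals_in_snoc a s t l :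
  intervals_in a s l -> s <= t -> intervals_in a t (l ++ (s, t) :: nil).
Proof.
  revert a; induction l as [|[u v] l IH]; simpl; intros a H Hst.
  - repeat split; lra.
  - destruct H as [H1 [H2 H3]]. repeat split; auto.
Qed.

Lemma total_length_snoc l s t : total_length (l ++ (s, t) :: nil) = total_length l + (t - s).
Proof. induction l as [|[u v] l IH]; simpl; [lra|]. rewrite IH; lra. Qed.

Lemma total_var_snoc f l s t :
  total_var f (l ++ (s, t) :: nil) = total_var f l + Rabs (f t - f s).
Proof. induction l as [|[u v] l IH]; simpl; [lra|]. rewrite IH; lra. Qed.

Lemma total_var_nonneg f l : 0 <= total_var f l.
Proof.
  induction l as [|[u v] l IH]; simpl; [lra|].
  pose proof (Rabs_pos (f v - f u)). lra.
Qed.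

Lemma total_length_nonneg a b l : intervals_in a b l -> 0 <= total_length l.
Proof.
  revert a; induction l as [|[u v] l IH]; simpl; intros a H; [lra|].
  destruct H as [H1 [H2 H3]]. apply IH in H3. lra.
Qed.

Lemma total_var_dominated (y h : R -> R) (a b L : R) :
  0 <= L ->
  (forall u w, a <= u -> u <= w -> w <= b ->
     Rabs (h w - h u) <= Rabs (y w - y u) + L * (w - u)) ->
  forall l a', a <= a' -> intervals_in a' b l ->
  total_var h l <= total_var y l + L * total_length l.
Proof.
  intros HL H l. induction l as [|[u v] l IH]; simpl; intros a' Ha' Hl; [lra|].
  destruct Hl as [H1 [H2 H3]]. pose proof (intervals_in_le _ _ _ H3).
  pose proof (H u v ltac:(lra) H2 H0). pose proof (IH v ltac:(lra) H3). nra.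
Qed.

Lemma abs_cont_on_dominated (y h : R -> R) (a b L : R) :
  0 <= L ->
  (forall u w, a <= u -> u <= w -> w <= b ->
     Rabs (h w - h u) <= Rabs (y w - y u) + L * (w - u)) ->
  abs_cont_on y a b -> abs_cont_on h a b.
Proof.
  intros HL H Hac eps Heps.
  destruct (Hac (eps / 2) ltac:(lra)) as [del [Hdel Hy]].
  assert (HL1 : 0 < eps / (2 * (L + 1))) by (apply Rdiv_lt_0_compat; lra).
  exists (Rmin del (eps / (2 * (L + 1)))). split; [apply Rmin_pos; auto|].
  intros l Hl Htl.
  pose proof (total_var_dominated y h a b L HL H l a (Rle_refl _) Hl).
  pose proof (Rmin_l del (eps / (2 * (L + 1)))). pose proof (Rmin_r del (eps / (2 * (L + 1)))).
  pose proof (Hy l Hl ltac:(lra)). pose proof (total_length_nonneg _ _ _ Hl).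
  assert (L * total_length l <= eps / 2).
  { apply Rle_trans with (L * (eps / (2 * (L + 1)))); [nra|].
    apply Rmult_le_reg_r with (2 * (L + 1)); [lra|].
    replace (L * (eps / (2 * (L + 1))) * (2 * (L + 1))) with (L * eps) by (field; lra). nra. }
  lra.
Qed.

Lemma abs_cont_on_opp y a b : abs_cont_on y a b -> abs_cont_on (fun t => - y t) a b.
Proof.
  apply abs_cont_on_dominated with 0; [lra|]. intros u w _ _ _.
  replace (- y w - - y u) with (- (y w - y u)) by ring. rewrite Rabs_Ropp. lra.
Qed.

Lemma abs_cont_on_shift y X a b : abs_cont_on y a b -> abs_cont_on (fun t => y t - X) a b.
Proof.
  apply abs_cont_on_dominated with 0; [lra|]. intros u w _ _ _.
  replace (y w - X - (y u - X)) with (y w - y u) by ring. lra.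
Qed.

(** * Covers of null sets *)

Definition cover_part (C E : nat -> R) (n : nat) (s : R) : R := Rmax 0 (Rmin s (E n) - C n).
Definition cover_length (C E : nat -> R) (M : nat) (s : R) : R :=
  fsum M (fun n => cover_part C E n s).

Lemma cover_part_nonneg C E n s : 0 <= cover_part C E n s.
Proof. apply Rmax_l. Qed.

Lemma cover_part_mono C E n s t : s <= t -> cover_part C E n s <= cover_part C E n t.
Proof. intros. unfold cover_part, Rmax, Rmin. repeat destruct Rle_dec; lra. Qed.

Lemma cover_part_le C E n s : C n <= E n -> cover_part C E n s <= E n - C n.
Proof. intros. unfold cover_part, Rmax, Rmin. repeat destruct Rle_dec; lra. Qed.

Lemma cover_part_incr C E n s t :
  C n <= s -> s <= t -> t <= E n -> cover_part C E n s + (t - s) <= cover_part C E n t.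
Proof. intros. unfold cover_part, Rmax, Rmin. repeat destruct Rle_dec; lra. Qed.

Lemma cover_length_mono C E M s t : s <= t -> cover_length C E M s <= cover_length C E M t.
Proof. intros. apply fsum_le. intros. apply cover_part_mono; auto. Qed.

Lemma cover_length_monoM C E M M' s :
  (M <= M')%nat -> cover_length C E M s <= cover_length C E M' s.
Proof.
  intros H. induction H; [lra|]. unfold cover_length in *. rewrite fsum_S.
  pose proof (cover_part_nonneg C E m s). lra.
Qed.

Lemma cover_length_incr C E M n s t :
  (n < M)%nat -> C n <= s -> s <= t -> t <= E n ->
  cover_length C E M s + (t - s) <= cover_length C E M t.
Proof.
  intros HnM H1 H2 H3. induction M as [|M IH]; [lia|]. unfold cover_length in *.
  rewrite !fsum_S. destruct (Nat.eq_dec n M) as [->|Hne].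
  - pose proof (cover_part_incr C E M s t H1 H2 H3).
    pose proof (fsum_le M (fun n => cover_part C E n s) (fun n => cover_part C E n t)
                  ltac:(intros; apply cover_part_mono; auto)). lra.
  - pose proof (IH ltac:(lia)). pose proof (cover_part_mono C E M s t H2). lra.
Qed.

(* Enlarging the n-th covering interval by δ/4 · 2^{-n-1} on each side makes the cover open
   while keeping the total length below δ. *)
Lemma null_set_open_cover N delta :
  null_set N -> 0 < delta ->
  exists C E : nat -> R, (forall t, N t -> exists n, C n < t < E n) /\
    (forall M s, cover_length C E M s < delta).
Proof.
  intros Hnull Hdelta.
  destruct (Hnull (delta / 4) ltac:(lra)) as [c [e [Hce [Hsum Hcov]]]].
  assert (Hpw : forall n, 0 < (/2) ^ S n) by (intros; apply pow_lt; lra).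
  exists (fun n => c n - delta / 4 * (/2) ^ S n), (fun n => e n + delta / 4 * (/2) ^ S n).
  split.
  - intros t Ht. destruct (Hcov t Ht) as [n Hn]. exists n. specialize (Hpw n). nra.
  - intros M s. eapply Rle_lt_trans.
    { apply fsum_le. intros n _. apply cover_part_le. specialize (Hce n). specialize (Hpw n). nra. }
    rewrite (fsum_ext M _ (fun n => (e n - c n) + delta / 2 * (/2) ^ S n))
      by (intros; lra).
    rewrite fsum_plus, fsum_scal, fsum_half_pow.
    assert (fsum M (fun n => e n - c n) <= delta / 4).
    { destruct M; [simpl; lra|]. rewrite fsum_sum_f_R0. apply Hsum. }
    assert (0 < (/2) ^ M) by (apply pow_lt; lra). nra.
Qed.

(** * A comparison principle for absolutely continuous functions *)

Lemma real_induction (P : R -> Prop) a b :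
  a <= b -> P a ->
  (forall m, a < m <= b ->
     exists r, 0 < r /\ forall s, a <= s <= m -> m - r < s -> P s -> P m) ->
  (forall m, a <= m < b -> P m -> exists t, m < t <= b /\ P t) ->
  P b.
Proof.
  intros Hab Ha Hclosed Hopen.
  set (A := fun s => a <= s <= b /\ P s).
  destruct (completeness A) as [m [Hub Hlub]].
  { exists b. intros s [Hs _]. lra. }
  { exists a. split; [lra | exact Ha]. }
  assert (Ham : a <= m) by (apply Hub; split; [lra | exact Ha]).
  assert (Hmb : m <= b) by (apply Hlub; intros s [Hs _]; lra).
  assert (Happ : forall r, 0 < r -> exists s, A s /\ m - r < s).
  { intros r Hr. apply NNPP. intros Hn.
    assert (Hup : is_upper_bound A (m - r)).
    { intros s Hs. apply Rnot_lt_le. intros Hlt. apply Hn. exists s. auto. }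
    apply Hlub in Hup. lra. }
  assert (HPm : P m).
  { destruct (Req_dec m a) as [->|Hma]; [exact Ha|].
    destruct (Hclosed m ltac:(lra)) as [r [Hr Hcl]].
    destruct (Happ r Hr) as [s [[Hs HPs] Hs2]].
    apply (Hcl s); auto. split; [lra | apply Hub; split; auto]. }
  destruct (Req_dec m b) as [<-|Hmb']; [exact HPm|].
  destruct (Hopen m ltac:(lra) HPm) as [t [Ht HPt]].
  assert (t <= m) by (apply Hub; split; [lra | exact HPt]). lra.
Qed.

Lemma Rabs_le_inv u v : Rabs u <= v -> - v <= u <= v.
Proof.
  intros H. pose proof (Rle_abs u). pose proof (Rle_abs (- u)). rewrite Rabs_Ropp in *. lra.
Qed.

Lemma derivable_pt_lim_local k p D eps :
  derivable_pt_lim k p D -> 0 < eps ->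
  exists r, 0 < r /\ forall u, Rabs (u - p) < r ->
    Rabs (k u - k p - D * (u - p)) <= eps * Rabs (u - p).
Proof.
  intros Hd He. destruct (Hd eps He) as [del Hdel]. exists del. split; [apply cond_pos|].
  intros u Hu. destruct (Req_dec u p) as [->|Hne].
  - replace (k p - k p - D * (p - p)) with 0 by ring. rewrite Rminus_diag, !Rabs_R0. lra.
  - assert (u - p <> 0) by lra. specialize (Hdel (u - p) H Hu).
    replace (p + (u - p)) with u in Hdel by ring.
    replace (k u - k p - D * (u - p)) with ((u - p) * ((k u - k p) / (u - p) - D))
      by (field; auto).
    rewrite Rabs_mult. pose proof (Rabs_pos (u - p)). nra.
Qed.

Lemma slow_growth_near k p D eps :
  derivable_pt_lim k p D -> (0 < k p -> D <= 0) -> 0 < eps ->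
  exists r, 0 < r /\ forall s t, p - r < s -> s <= p -> p <= t -> t < p + r ->
    k t <= k s + eps * (t - s) \/ k t <= eps.
Proof.
  intros Hd HD He.
  destruct (derivable_pt_lim_local k p D eps Hd He) as [r0 [Hr0 Hloc]].
  assert (HDe : 0 < Rabs D + eps) by (pose proof (Rabs_pos D); lra).
  exists (Rmin r0 (eps / (Rabs D + eps))). split.
  { apply Rmin_pos; auto. apply Rdiv_lt_0_compat; auto. }
  intros s t H1 H2 H3 H4.
  pose proof (Rmin_l r0 (eps / (Rabs D + eps))). pose proof (Rmin_r r0 (eps / (Rabs D + eps))).
  pose proof (Hloc t ltac:(rewrite Rabs_right; lra)) as Lt.
  pose proof (Hloc s ltac:(rewrite Rabs_left1; lra)) as Ls.
  rewrite (Rabs_right (t - p)) in Lt by lra. rewrite (Rabs_left1 (s - p)) in Ls by lra.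
  apply Rabs_le_inv in Lt. apply Rabs_le_inv in Ls.
  destruct (Rlt_le_dec 0 (k p)) as [Hp|Hp].
  - left. specialize (HD Hp). nra.
  - right. pose proof (Rle_abs D).
    assert (Htp : (Rabs D + eps) * (t - p) <= eps).
    { apply Rmult_le_reg_r with (/ (Rabs D + eps)); [apply Rinv_0_lt_compat; lra|].
      replace ((Rabs D + eps) * (t - p) * / (Rabs D + eps)) with (t - p) by (field; lra).
      unfold Rdiv in *. lra. }
    nra.
Qed.

(* Creeping invariant at time s: k s exceeds ε (s - a) + ε by at most the variation of k over
   the intervals l crossed blindly around points of N, whose total length is controlled by the
   cover; absolute continuity then makes that variation small. *)
Definition creep_inv (k : R -> R) (a eps : R) (C E : nat -> R) (s : R) : Prop :=
  exists M l, intervals_in a s l /\ total_length l <= cover_length C E M s /\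
    k s <= eps * (s - a) + eps + total_var k l.

Lemma creep_inv_start k a eps C E : k a <= 0 -> 0 <= eps -> creep_inv k a eps C E a.
Proof. intros. exists O, nil. unfold cover_length. simpl. repeat split; lra. Qed.

Lemma creep_inv_across k a eps C E s t n :
  0 < eps -> creep_inv k a eps C E s -> s <= t -> C n <= s -> t <= E n ->
  creep_inv k a eps C E t.
Proof.
  intros He [M [l [H1 [H2 H3]]]] Hst Hc He'.
  exists (Nat.max M (S n)), (l ++ (s, t) :: nil). split; [|split].
  - apply intervals_in_snoc; auto.
  - rewrite total_length_snoc.
    pose proof (cover_length_monoM C E M (Nat.max M (S n)) s ltac:(lia)).
    pose proof (cover_length_incr C E (Nat.max M (S n)) n s t ltac:(lia) Hc Hst He'). lra.
  - rewrite total_var_snoc. pose proof (Rle_abs (k t - k s)). nra.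
Qed.

Lemma creep_inv_slow k a eps C E s t :
  0 < eps -> creep_inv k a eps C E s -> a <= s -> s <= t ->
  (k t <= k s + eps * (t - s) \/ k t <= eps) -> creep_inv k a eps C E t.
Proof.
  intros He [M [l [H1 [H2 H3]]]] Has Hst Hk.
  exists M, l. split; [|split].
  - eapply intervals_in_widen; eauto.
  - pose proof (cover_length_mono C E M s t Hst). lra.
  - pose proof (total_var_nonneg k l). destruct Hk; nra.
Qed.

Section Creep.
Variables (k : R -> R) (a b eps : R) (N : R -> Prop) (C E : nat -> R).
Hypothesis Hab : a <= b.
Hypothesis Heps : 0 < eps.
Hypothesis Hcover : forall t, N t -> exists n, C n < t < E n.
Hypothesis Hka : k a <= 0.
Hypothesis Hstart : exists r, 0 < r /\ forall t, a <= t <= b -> t < a + r -> k t <= eps.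
Hypothesis Hder : forall t, a < t -> t <= b -> ~ N t ->
  exists D, derivable_pt_lim k t D /\ (0 < k t -> D <= 0).

Lemma creep_inv_local m :
  a < m <= b ->
  exists r, 0 < r /\ forall s t, m - r < s <= m -> m <= t < m + r -> a <= s ->
    creep_inv k a eps C E s -> creep_inv k a eps C E t.
Proof.
  intros Hm. destruct (classic (N m)) as [HN|HN].
  - destruct (Hcover m HN) as [n Hn].
    exists (Rmin (m - C n) (E n - m)). split; [apply Rmin_pos; lra|].
    intros s t Hs Ht Has Hinv.
    pose proof (Rmin_l (m - C n) (E n - m)). pose proof (Rmin_r (m - C n) (E n - m)).
    apply (creep_inv_across k a eps C E s t n); auto; lra.
  - destruct (Hder m ltac:(lra) ltac:(lra) HN) as [D [HD HD0]].
    destruct (slow_growth_near k m D eps HD HD0 Heps) as [r [Hr Hslow]].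
    exists r. split; [exact Hr|]. intros s t Hs Ht Has Hinv.
    apply (creep_inv_slow k a eps C E s t); auto; try lra. apply Hslow; lra.
Qed.

Lemma creep_inv_end : creep_inv k a eps C E b.
Proof.
  apply (real_induction (creep_inv k a eps C E) a b); auto.
  - apply creep_inv_start; lra.
  - intros m Hm. destruct (creep_inv_local m Hm) as [r [Hr Hloc]].
    exists r. split; [exact Hr|]. intros s Hs Hsr Hinv. apply (Hloc s m); auto; lra.
  - intros m Hm Hinv. destruct (Req_dec m a) as [->|Hma].
    + destruct Hstart as [r [Hr Hsmall]].
      pose proof (Rmin_l b (a + r / 2)). pose proof (Rmin_r b (a + r / 2)).
      set (t := Rmin b (a + r / 2)) in *.
      assert (a < t) by (unfold t, Rmin; destruct Rle_dec; lra).
      exists t. split; [lra|].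
      apply (creep_inv_slow k a eps C E a t); auto; try lra. right. apply Hsmall; lra.
    + destruct (creep_inv_local m ltac:(lra)) as [r [Hr Hloc]].
      pose proof (Rmin_l b (m + r / 2)). pose proof (Rmin_r b (m + r / 2)).
      set (t := Rmin b (m + r / 2)) in *.
      assert (m < t) by (unfold t, Rmin; destruct Rle_dec; lra).
      exists t. split; [lra|]. apply (Hloc m t); auto; lra.
Qed.

End Creep.

Lemma nonpos_of_deriv_nonpos k a b N :
  a <= b -> null_set N -> abs_cont_on k a b -> k a <= 0 ->
  (forall t, a < t -> t <= b -> ~ N t ->
     exists D, derivable_pt_lim k t D /\ (0 < k t -> D <= 0)) ->
  k b <= 0.
Proof.
  intros Hab Hnull Hac Hka Hder. apply Rnot_lt_le. intros Hkb.
  set (eps := k b / (b - a + 3)).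
  assert (Heps : 0 < eps) by (unfold eps; apply Rdiv_lt_0_compat; lra).
  destruct (Hac eps Heps) as [del [Hdel Hvar]].
  destruct (null_set_open_cover N del Hnull Hdel) as [C [E [Hcover Hlen]]].
  assert (Hstart : exists r, 0 < r /\ forall t, a <= t <= b -> t < a + r -> k t <= eps).
  { exists del. split; [exact Hdel|]. intros t Ht Htr.
    assert (Hv := Hvar ((a, t) :: nil) ltac:(simpl; lra) ltac:(simpl; lra)).
    simpl in Hv. pose proof (Rle_abs (k t - k a)). lra. }
  destruct (creep_inv_end k a b eps N C E Hab Heps Hcover Hka Hstart Hder)
    as [M [l [Hl [Hll Hkl]]]].
  pose proof (Hvar l Hl ltac:(specialize (Hlen M b); lra)).
  assert (eps * (b - a + 3) = k b) by (unfold eps; field; lra). nra.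
Qed.

(** * Exponential decay for linear equations with decaying forcing *)

Lemma derivable_pt_lim_ext (f g : R -> R) t l l' :
  (forall u, f u = g u) -> l = l' -> derivable_pt_lim f t l -> derivable_pt_lim g t l'.
Proof.
  intros Hfg <- Hf eps He. destruct (Hf eps He) as [del Hd]. exists del.
  intros h Hh Hh2. rewrite <- !Hfg. auto.
Qed.

Lemma derivable_pt_lim_exp_lin g t :
  derivable_pt_lim (fun u => exp (- g * u)) t (- g * exp (- g * t)).
Proof.
  assert (H1 : derivable_pt_lim (mult_real_fct (- g) id) t (- g * 1))
    by (apply derivable_pt_lim_scal, derivable_pt_lim_id).
  eapply derivable_pt_lim_ext;
    [| | exact (derivable_pt_lim_comp _ exp t _ _ H1 (derivable_pt_lim_exp _))];
    unfold comp, mult_real_fct, id; [reflexivity | ring].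
Qed.

Lemma exp_le_exp x y : x <= y -> exp x <= exp y.
Proof. intros [H|<-]; [left; apply exp_increasing; auto | lra]. Qed.

Lemma exp_decr_lipschitz g u w :
  0 <= g -> 0 <= u -> u <= w -> 0 <= exp (- g * u) - exp (- g * w) <= g * (w - u).
Proof.
  intros Hg Hu Huw.
  replace (- g * w) with (- g * u + - g * (w - u)) by ring. rewrite exp_plus.
  assert (exp (- g * u) <= 1) by (rewrite <- exp_0; apply exp_le_exp; nra).
  assert (exp (- g * (w - u)) <= 1) by (rewrite <- exp_0; apply exp_le_exp; nra).
  pose proof (exp_pos (- g * u)). pose proof (exp_ineq1_le (- g * (w - u))).
  split; nra.
Qed.

(* y is compared with the solution K e^{-bt} + |y 0| e^{-ct} of z' = -c z + A e^{-bt}. *)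
Lemma linear_ode_upper_bound (y g : R -> R) N c b A :
  0 < b -> b < c -> 0 <= A -> null_set N ->
  (forall T, 0 <= T -> abs_cont_on y 0 T) ->
  (forall t, 0 < t -> ~ N t -> derivable_pt_lim y t (- c * y t + g t)) ->
  (forall t, 0 <= t -> g t <= A * exp (- b * t)) ->
  forall t, 0 <= t -> y t <= (A / (c - b) + Rabs (y 0)) * exp (- b * t).
Proof.
  intros Hb Hbc HA Hnull Hac Hder Hg t Ht.
  set (K := A / (c - b)). set (Y0 := Rabs (y 0)).
  assert (HK : K * (c - b) = A) by (unfold K; field; lra).
  assert (HK0 : 0 <= K)
    by (unfold K; apply Rmult_le_pos; [lra | left; apply Rinv_0_lt_compat; lra]).
  assert (HY0 : 0 <= Y0) by apply Rabs_pos.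
  set (v := fun u => y u - (K * exp (- b * u) + Y0 * exp (- c * u))).
  assert (Hv : v t <= 0).
  { apply (nonpos_of_deriv_nonpos v 0 t N Ht Hnull).
    - apply (abs_cont_on_dominated y v 0 t (K * b + Y0 * c)); [nra| |apply Hac; lra].
      intros u w H1 H2 H3. unfold v.
      pose proof (exp_decr_lipschitz b u w ltac:(lra) H1 H2).
      pose proof (exp_decr_lipschitz c u w ltac:(lra) H1 H2).
      replace (y w - (K * exp (- b * w) + Y0 * exp (- c * w))
               - (y u - (K * exp (- b * u) + Y0 * exp (- c * u))))
        with ((y w - y u) + (K * (exp (- b * u) - exp (- b * w))
                             + Y0 * (exp (- c * u) - exp (- c * w)))) by ring.
      eapply Rle_trans; [apply Rabs_triang|]. apply Rplus_le_compat_l.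
      rewrite Rabs_right by nra. nra.
    - unfold v. rewrite !Rmult_0_r, exp_0. pose proof (Rle_abs (y 0)). unfold Y0. lra.
    - intros s Hs Hst HN.
      exists ((- c * y s + g s) - (K * (- b * exp (- b * s)) + Y0 * (- c * exp (- c * s)))).
      split.
      + eapply derivable_pt_lim_ext; [| reflexivity |].
        2: { apply derivable_pt_lim_minus; [apply Hder; auto|].
             apply derivable_pt_lim_plus; apply derivable_pt_lim_scal;
               apply derivable_pt_lim_exp_lin. }
        intros u. reflexivity.
      + intros Hvs. unfold v in Hvs. pose proof (Hg s ltac:(lra)).
        pose proof (exp_pos (- b * s)). pose proof (exp_pos (- c * s)).
        assert (0 < c * (y s - (K * exp (- b * s) + Y0 * exp (- c * s))))
          by (apply Rmult_lt_0_compat; lra).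
        nra. }
  unfold v in Hv. assert (exp (- c * t) <= exp (- b * t)) by (apply exp_le_exp; nra). nra.
Qed.

Lemma linear_ode_exp_decay (y Dy g : R -> R) N c b X :
  0 < b -> b < c -> null_set N ->
  (forall T, 0 <= T -> abs_cont_on y 0 T) ->
  (forall t, 0 < t -> ~ N t -> derivable_pt_lim y t (Dy t)) ->
  (forall t, 0 < t -> Dy t = - c * (y t - X) + g t) ->
  (exists A, forall t, 0 <= t -> Rabs (g t) <= A * exp (- b * t)) ->
  exists B, forall t, 0 <= t -> Rabs (y t - X) <= B * exp (- b * t).
Proof.
  intros Hb Hbc Hnull Hac Hder HDy [A HA].
  set (A' := Rabs A). assert (HA' : 0 <= A') by apply Rabs_pos.
  assert (Hg : forall t, 0 <= t -> Rabs (g t) <= A' * exp (- b * t)).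
  { intros t Ht. pose proof (HA t Ht). pose proof (Rle_abs A). pose proof (exp_pos (- b * t)).
    unfold A'. nra. }
  assert (Hz : forall t, 0 < t -> ~ N t ->
            derivable_pt_lim (fun u => y u - X) t (- c * (y t - X) + g t)).
  { intros t Ht HN. rewrite <- HDy by exact Ht.
    eapply derivable_pt_lim_ext; [| |apply derivable_pt_lim_minus;
      [apply Hder; auto | apply (derivable_pt_lim_const X)]]; reflexivity || ring. }
  exists (A' / (c - b) + Rabs (y 0 - X)). intros t Ht. apply Rabs_le. split.
  - assert (- (y t - X) <= (A' / (c - b) + Rabs (- (y 0 - X))) * exp (- b * t)).
    { apply (linear_ode_upper_bound (fun u => - (y u - X)) (fun u => - g u) N c b A');
        auto.
      - intros T HT. apply abs_cont_on_opp, abs_cont_on_shift, Hac; auto.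
      - intros s Hs HN. eapply derivable_pt_lim_ext;
          [| | apply derivable_pt_lim_opp, Hz; auto]; reflexivity || ring.
      - intros s Hs. pose proof (Hg s Hs). pose proof (Rle_abs (- g s)).
        rewrite Rabs_Ropp in *. lra. }
    rewrite Rabs_Ropp in H. lra.
  - apply (linear_ode_upper_bound (fun u => y u - X) g N c b A'); auto.
    + intros T HT. apply abs_cont_on_shift, Hac; auto.
    + intros s Hs. pose proof (Hg s Hs). pose proof (Rle_abs (g s)). lra.
Qed.

Lemma fsum_exp_bound (f : R -> nat -> R) g n :
  (forall k, (k < n)%nat -> exists B, forall t, 0 <= t -> Rabs (f t k) <= B * exp (- g * t)) ->
  exists B, forall t, 0 <= t -> Rabs (fsum n (f t)) <= B * exp (- g * t).
Proof.
  induction n as [|n IH]; intros H.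
  - exists 0. intros. simpl. rewrite Rabs_R0. lra.
  - destruct IH as [B1 H1]; [intros; apply H; lia|].
    destruct (H n ltac:(lia)) as [B2 H2]. exists (B1 + B2). intros t Ht.
    rewrite fsum_S. eapply Rle_trans; [apply Rabs_triang|].
    specialize (H1 t Ht). specialize (H2 t Ht). lra.
Qed.

(** * The drift away from the boundary *)

Definition row_tail (I : nat) (x : state) (i : nat) : R :=
  fsum (S I) (fun j => if Nat.ltb i j then x i j else 0).

Lemma row_split I x i : (i <= I)%nat -> row I x i = x i i + row_tail I x i.
Proof.
  intros Hi. unfold row, row_tail.
  assert (fsum (S I) (fun j => (if Nat.leb i j then x i j else 0)
                              - (if Nat.ltb i j then x i j else 0)) = x i i).
  { rewrite (fsum_single (S I) i); [| lia |].
    - rewrite Nat.leb_refl, Nat.ltb_irrefl. ring.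
    - intros k Hk Hki. destruct (Nat.leb_spec i k); destruct (Nat.ltb_spec i k); try lia; ring. }
  rewrite fsum_minus in H. lra.
Qed.

Section Interior.
Variables (lam : R) (d I : nat) (x : state).
Hypothesis HS : in_S I x.
Hypothesis Hx00 : 0 < x 0%nat 0%nat.

Lemma csum_gt0 k : (k <= I)%nat -> 0 < csum x k.
Proof.
  induction k as [|k IH]; intros Hk; unfold csum, col in *; simpl in *; [lra|].
  assert (0 <= fsum (S (S k)) (fun i => x i (S k))).
  { apply fsum_nonneg. intros. apply HS; lia. }
  specialize (IH ltac:(lia)). simpl in *. lra.
Qed.

Lemma Rj_eq0 k : (k <= I)%nat -> Rj lam d I x k = 0.
Proof. intros Hk. pose proof (csum_gt0 k Hk). unfold Rj, ind0. destruct Req_EM_T; [lra|ring]. Qed.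

Lemma Gj_eq0 k : (k <= I)%nat -> Gj lam d I x k = 0.
Proof. intros Hk. pose proof (csum_gt0 k Hk). unfold Gj. destruct Req_EM_T; [lra|ring]. Qed.

Lemma rho_eq0 k a b : (k <= I)%nat -> rho lam d I x k a b = 0.
Proof. intros Hk. unfold rho. rewrite Rj_eq0 by auto. destruct Rlt_dec; ring. Qed.

Lemma drift_off_diag i j : (i < j)%nat -> (j <= I)%nat ->
  drift lam d I x i j = x (S i) j - (bnat (Nat.ltb 0 i) + lam * dR d) * x i j.
Proof.
  intros Hij HjI. unfold drift. rewrite (proj2 (Nat.ltb_lt i j) Hij), !rho_eq0 by lia. ring.
Qed.

Lemma drift_diag i : (1 <= i)%nat -> (i < I)%nat ->
  drift lam d I x i i = - x i i + lam * dR d * row_tail I x i + (if Nat.eqb i 1 then lam else 0).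
Proof.
  intros H1 H2. unfold drift. rewrite Nat.ltb_irrefl.
  rewrite (proj2 (Nat.eqb_neq i 0)), (proj2 (Nat.eqb_neq i I)) by lia.
  destruct (Nat.eqb_spec i 1) as [->|];
    rewrite ?Rj_eq0, ?Gj_eq0, ?rho_eq0, row_split by lia; ring.
Qed.

Lemma drift_last : (1 < I)%nat -> drift lam d I x I I = - x I I.
Proof.
  intros HI. unfold drift. rewrite Nat.ltb_irrefl, Nat.eqb_refl, (proj2 (Nat.eqb_neq I 0)) by lia.
  rewrite !rho_eq0, Gj_eq0 by lia. ring.
Qed.

End Interior.

Lemma dR_ge2 d : (2 <= d)%nat -> 2 <= dR d.
Proof. intros Hd. unfold dR. replace 2 with (INR 2) by (simpl; ring). apply le_INR; auto. Qed.

Lemma xstar_ge2 lam d i j : (2 <= i)%nat -> xstar lam d i j = 0.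
Proof. intros H. destruct i as [|[|i]]; [lia|lia|reflexivity]. Qed.

Lemma xstar_off_diag lam d i j : (1 <= i)%nat -> (i < j)%nat -> xstar lam d i j = 0.
Proof.
  intros H1 H2. destruct i as [|[|i]]; [lia| |reflexivity].
  destruct j as [|[|j]]; [lia|lia|reflexivity].
Qed.

Lemma xstar_off_diag_rec lam d i j : (2 <= d)%nat -> (i < j)%nat ->
  xstar lam d (S i) j = (bnat (Nat.ltb 0 i) + lam * dR d) * xstar lam d i j.
Proof.
  intros Hd H. pose proof (dR_ge2 d Hd).
  destruct i as [|i].
  - destruct j as [|[|j]]; [lia | | ]; unfold bnat; simpl.
    + field. lra.
    + ring.
  - rewrite xstar_ge2, xstar_off_diag by lia. ring.
Qed.

Lemma xstar_mass lam d I : (2 <= d)%nat -> (1 < I)%nat ->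
  fsum (S I) (fun i => row I (xstar lam d) i) = 1.
Proof.
  intros Hd HI. pose proof (dR_ge2 d Hd).
  rewrite fsum_two; [| lia |].
  - unfold row.
    rewrite fsum_two
      by (lia || (intros k H1 H2; destruct k as [|[|k]]; [lia|lia|reflexivity])).
    rewrite (fsum_single (S I) 1); [| lia |].
    + simpl. field. lra.
    + intros k H1 H2. destruct k as [|[|k]]; [reflexivity|lia|reflexivity].
  - intros k H1 H2. unfold row. apply fsum_zero. intros j Hj.
    destruct (Nat.leb k j); [apply xstar_ge2; lia | reflexivity].
Qed.

Section Convergence.
Variables (lam : R) (d I : nat) (x : R -> state).
Hypothesis Hlam : 0 < lam.
Hypothesis Hlam1 : lam < 1.
Hypothesis Hd : (2 <= d)%nat.
Hypothesis HI : (1 < I)%nat.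
Hypothesis Hfluid : fluid_solution lam d I x.
Hypothesis Hx00 : forall t, 0 <= t -> 0 < x t 0%nat 0%nat.

Definition exp_close (i j : nat) : Prop := exists B, forall t, 0 <= t ->
  Rabs (x t i j - xstar lam d i j) <= B * exp (- (lam / 2) * t).

Lemma exp_close_of_linear i j c g :
  (i <= j)%nat -> (j <= I)%nat -> lam / 2 < c ->
  (forall t, 0 < t ->
     drift lam d I (x t) i j = - c * (x t i j - xstar lam d i j) + g t) ->
  (exists A, forall t, 0 <= t -> Rabs (g t) <= A * exp (- (lam / 2) * t)) ->
  exp_close i j.
Proof.
  intros Hij HjI Hc Hdrift Hg. destruct Hfluid as [_ [Hac [N [Hnull Hder]]]].
  apply (linear_ode_exp_decay (fun t => x t i j) (fun t => drift lam d I (x t) i j) g N c);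
    auto; lra.
Qed.

Lemma exp_close_last : exp_close I I.
Proof.
  destruct Hfluid as [HS _].
  apply (exp_close_of_linear I I 1 (fun _ => 0)); auto; try lra.
  - intros t Ht.
    rewrite (drift_last lam d I (x t)), xstar_ge2
      by (auto || lia || apply HS || apply Hx00; lra).
    ring.
  - exists 0. intros. rewrite Rabs_R0. lra.
Qed.

Lemma exp_close_off_diag i j : (i < j)%nat -> (j <= I)%nat -> exp_close (S i) j -> exp_close i j.
Proof.
  intros Hij HjI [B HB]. destruct Hfluid as [HS _]. pose proof (dR_ge2 d Hd).
  assert (0 <= bnat (Nat.ltb 0 i)) by (unfold bnat; destruct Nat.ltb; lra).
  apply (exp_close_of_linear i j (bnat (Nat.ltb 0 i) + lam * dR d)
           (fun t => x t (S i) j - xstar lam d (S i) j)); try lia; try nra.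
  - intros t Ht. rewrite (drift_off_diag lam d I (x t)), xstar_off_diag_rec;
      auto; try (apply HS || apply Hx00; lra). ring.
  - exists B. exact HB.
Qed.

Lemma exp_close_diag i : (1 <= i)%nat -> (i < I)%nat ->
  (forall j, (i < j)%nat -> (j <= I)%nat -> exp_close i j) -> exp_close i i.
Proof.
  intros H1 H2 Hrow. destruct Hfluid as [HS _]. pose proof (dR_ge2 d Hd).
  apply (exp_close_of_linear i i 1 (fun t => lam * dR d * row_tail I (x t) i)); try lia; try lra.
  - intros t Ht. rewrite (drift_diag lam d I (x t)) by (auto || apply HS || apply Hx00; lra).
    destruct (Nat.eqb_spec i 1) as [->|]; [simpl; ring|]. rewrite xstar_ge2 by lia. ring.
  - destruct (fsum_exp_bound (fun t k => if Nat.ltb i k then x t i k else 0) (lam / 2) (S I))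
      as [B HB].
    { intros k Hk. destruct (Nat.ltb_spec i k).
      - destruct (Hrow k) as [B HB]; try lia. exists B. intros t Ht.
        specialize (HB t Ht). rewrite xstar_off_diag, Rminus_0_r in HB by lia. exact HB.
      - exists 0. intros. rewrite Rabs_R0. lra. }
    exists (lam * dR d * B). intros t Ht. specialize (HB t Ht). unfold row_tail.
    rewrite Rabs_mult, (Rabs_right (lam * dR d)) by nra.
    replace (lam * dR d * B * exp (- (lam / 2) * t))
      with (lam * dR d * (B * exp (- (lam / 2) * t))) by ring.
    apply Rmult_le_compat_l; [nra | exact HB].
Qed.

Lemma exp_close_row i : (1 <= i)%nat -> (i <= I)%nat ->
  forall j, (i <= j)%nat -> (j <= I)%nat -> exp_close i j.
Proof.
  intros H1 H2. remember (I - i)%nat as k eqn:Hk. revert i H1 H2 Hk.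
  induction k as [|k IH]; intros i H1 H2 Hk j Hij HjI.
  - replace i with I by lia. replace j with I by lia. apply exp_close_last.
  - assert (Hoff : forall j, (i < j)%nat -> (j <= I)%nat -> exp_close i j).
    { intros j' Hij' HjI'. apply exp_close_off_diag; auto. apply (IH (S i)); lia. }
    destruct (Nat.eq_dec j i) as [->|Hji]; [apply exp_close_diag; auto; lia | apply Hoff; lia].
Qed.

Lemma exp_close_nonzero i j : (i <= j)%nat -> (j <= I)%nat -> (0 < j)%nat -> exp_close i j.
Proof.
  intros Hij HjI Hj. destruct i as [|i]; [|apply exp_close_row; lia].
  apply exp_close_off_diag; auto. apply exp_close_row; lia.
Qed.

Definition deviation (t : R) (i j : nat) : R :=
  if Nat.leb i j then x t i j - xstar lam d i j else 0.

(* x t and x⋆ both have mass 1, so the deviations sum to 0. *)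
Lemma deviation00 t : 0 <= t ->
  x t 0%nat 0%nat - xstar lam d 0 0 =
  - fsum (S I) (fun i => fsum (S I) (fun j => if Nat.eqb j 0 then 0 else deviation t i j)).
Proof.
  intros Ht. destruct Hfluid as [HS _]. destruct (HS t Ht) as [_ Hmass].
  assert (Hzero : fsum (S I) (fun i => fsum (S I) (deviation t i)) = 0).
  { rewrite (fsum_ext (S I) _ (fun i => row I (x t) i - row I (xstar lam d) i)).
    - rewrite fsum_minus. transitivity (1 - 1); [|ring].
      f_equal; [exact Hmass | apply xstar_mass; auto].
    - intros i Hi. unfold row. rewrite <- fsum_minus. apply fsum_ext. intros j Hj.
      unfold deviation. destruct (Nat.leb i j); ring. }
  enough (Hsplit : fsum (S I) (fun i => fsum (S I) (deviation t i))
    - fsum (S I) (fun i => fsum (S I) (fun j => if Nat.eqb j 0 then 0 else deviation t i j))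
    = x t 0%nat 0%nat - xstar lam d 0 0) by lra.
  rewrite <- fsum_minus, (fsum_single (S I) 0); [| lia |].
  - rewrite <- fsum_minus, (fsum_single (S I) 0); [| lia |].
    + unfold deviation. simpl. ring.
    + intros k Hk Hk0. rewrite (proj2 (Nat.eqb_neq k 0) Hk0). ring.
  - intros i Hi Hi0. rewrite <- fsum_minus. apply fsum_zero. intros j Hj.
    unfold deviation. destruct (Nat.eqb_spec j 0) as [->|]; [|ring].
    destruct (Nat.leb_spec i 0); [lia|ring].
Qed.

Lemma exp_close00 : exp_close 0 0.
Proof.
  destruct (fsum_exp_bound (fun t i => fsum (S I) (fun j =>
              if Nat.eqb j 0 then 0 else deviation t i j)) (lam / 2) (S I)) as [B HB].
  - intros i Hi. apply fsum_exp_bound. intros j Hj.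
    unfold deviation. destruct (Nat.eqb_spec j 0); [|destruct (Nat.leb_spec i j)].
    + exists 0. intros. rewrite Rabs_R0. lra.
    + apply exp_close_nonzero; lia.
    + exists 0. intros. rewrite Rabs_R0. lra.
  - exists B. intros t Ht. rewrite deviation00, Rabs_Ropp by exact Ht. apply HB, Ht.
Qed.

Lemma exp_close_all i j : (i <= j)%nat -> (j <= I)%nat -> exp_close i j.
Proof.
  intros Hij HjI. destruct j as [|j].
  - replace i with 0%nat by lia. apply exp_close00.
  - apply exp_close_nonzero; lia.
Qed.

Lemma fluid_exp_convergence : exists alpha beta, 0 < alpha /\ 0 < beta /\
  forall t, 0 <= t -> eucl_dist I (x t) (xstar lam d) <= alpha * exp (- beta * t).
Proof.
  destruct (fsum_exp_bound (fun t i => fsum (S I) (fun j =>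
              if Nat.leb i j then (x t i j - xstar lam d i j) ^ 2 else 0)) lam (S I))
    as [B HB].
  { intros i Hi. apply fsum_exp_bound. intros j Hj. destruct (Nat.leb_spec i j).
    - destruct (exp_close_all i j) as [B HB]; try lia. exists (B ^ 2). intros t Ht.
      specialize (HB t Ht).
      rewrite Rabs_right, <- pow2_abs by (apply Rle_ge, pow2_ge_0).
      replace (exp (- lam * t)) with (exp (- (lam / 2) * t) ^ 2)
        by (simpl; rewrite Rmult_1_r, <- exp_plus; f_equal; lra).
      pose proof (Rabs_pos (x t i j - xstar lam d i j)). nra.
    - exists 0. intros. rewrite Rabs_R0. lra. }
  exists (sqrt (Rabs B) + 1), (lam / 2). split; [pose proof (sqrt_pos (Rabs B)); lra|].
  split; [lra|]. intros t Ht. specialize (HB t Ht). unfold eucl_dist.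
  set (e := exp (- (lam / 2) * t)).
  assert (He : exp (- lam * t) = e ^ 2)
    by (unfold e; simpl; rewrite Rmult_1_r, <- exp_plus; f_equal; lra).
  rewrite He in HB. assert (0 < e) by apply exp_pos.
  pose proof (Rle_abs B). pose proof (Rabs_pos B). pose proof (sqrt_pos (Rabs B)).
  eapply Rle_trans; [apply sqrt_le_1_alt; eapply Rle_trans; [apply Rle_abs | exact HB]|].
  apply Rle_trans with (sqrt ((sqrt (Rabs B) * e) ^ 2)).
  - apply sqrt_le_1_alt. rewrite Rpow_mult_distr, pow2_sqrt by exact H1. nra.
  - rewrite sqrt_pow2 by nra. nra.
Qed.

End Convergence.

Theorem mainTheorem11 (lam : R) (d I : nat) (x : R -> state) :
  0 < lam -> lam < 1 -> (2 <= d)%nat -> (1 < I)%nat ->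
  lam < 1 - / INR d ->
  fluid_solution lam d I x ->
  (forall t, 0 <= t -> 0 < x t 0%nat 0%nat) ->
  exists alpha beta, 0 < alpha /\ 0 < beta /\
    forall t, 0 <= t ->
      eucl_dist I (x t) (xstar lam d) <= alpha * exp (- beta * t).
Proof.
  intros Hlam Hlam1 Hd HI _ Hfluid Hx00.
  exact (fluid_exp_convergence lam d I x Hlam Hlam1 Hd HI Hfluid Hx00).
Qed.
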